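(* Let $G$ be a nilpotent group of class $k$, let $v(\bar x,\bar z)$ be a group word in variables $\bar x=(x_1,\dots,x_n)$, $\bar z$ and their inverses, and let $\bar g$ be a tuple of elements of $G$ (of the length of $\bar z$) and $c\in G$. If the set $\{\bar h\in G^n:v(\bar h,\bar g)=c\}$ is $2^k$-large in $G^n$, then $v(\bar h,\bar g)=c$ for all $\bar h\in G^n$.
   Context: A subset $X$ of a group $K$ is $m$-large in $K$ if the intersection of any $m$ left translates $a_1X\cap\dots\cap a_mX$ ($a_i\in K$) is non-empty. *)

From mathcomp Require Import all_boot.

Set Implicit Arguments.
Unset Strict Implicit.
Unset Printing Implicit Defensive.

Record group := Group {
  carrier :> Type;
  gmul : carrier -> carrier -> carrier;
  ginv : carrier -> carrier;
  gone : carrier;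
  gmulA : forall x y z, gmul x (gmul y z) = gmul (gmul x y) z;
  gmul1 : forall x, gmul gone x = x;
  gmulV : forall x, gmul (ginv x) x = gone
}.

Arguments gmul {g}.
Arguments ginv {g}.
Arguments gone {g}.

Section Power.
Variables (G : group) (n : nat).
Definition pmul (a b : {ffun 'I_n -> G}) : {ffun 'I_n -> G} :=
  [ffun i => gmul (a i) (b i)].
Definition pinv (a : {ffun 'I_n -> G}) : {ffun 'I_n -> G} :=
  [ffun i => ginv (a i)].
Definition pone : {ffun 'I_n -> G} := [ffun _ => gone].
Lemma pmulA x y z : pmul x (pmul y z) = pmul (pmul x y) z.
Proof. by apply/ffunP => i; rewrite !ffunE gmulA. Qed.
Lemma pmul1 x : pmul pone x = x.
Proof. by apply/ffunP => i; rewrite !ffunE gmul1. Qed.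
Lemma pmulV x : pmul (pinv x) x = pone.
Proof. by apply/ffunP => i; rewrite !ffunE gmulV. Qed.
Definition power_group : group := Group pmulA pmul1 pmulV.
End Power.

Definition large (K : group) (m : nat) (X : K -> Prop) : Prop :=
  forall a : 'I_m -> K,
    exists y : K, forall i : 'I_m, exists x : K, X x /\ y = gmul (a i) x.

Inductive gen (G : group) (S : G -> Prop) : G -> Prop :=
| gen_in x : S x -> gen S x
| gen_one : gen S gone
| gen_mul x y : gen S x -> gen S y -> gen S (gmul x y)
| gen_inv x : gen S x -> gen S (ginv x).

Definition comm (G : group) (x y : G) : G :=
  gmul (gmul (ginv x) (ginv y)) (gmul x y).

(* Lower central series: lcs G 0 = gamma_1(G) = G,
   lcs G (i+1) = gamma_{i+2}(G) = [gamma_{i+1}(G), G]. *)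
Fixpoint lcs (G : group) (i : nat) : G -> Prop :=
  match i with
  | 0 => fun _ => True
  | i.+1 => gen (fun z => exists x y, @lcs G i x /\ z = comm x y)
  end.

Definition trivial_sub (G : group) (H : G -> Prop) : Prop :=
  forall x, H x -> x = gone.

Definition nilpotent_class (G : group) (k : nat) : Prop :=
  trivial_sub (@lcs G k) /\ forall j, j < k -> ~ trivial_sub (@lcs G j).

(* Group words in variables x_1..x_n, z_1..z_m and their inverses:
   a list of literals (variable, inverted?). *)
Definition word (n m : nat) := seq (('I_n + 'I_m) * bool).

Definition eval_word (G : group) n m (v : word n m)
    (h : 'I_n -> G) (g : 'I_m -> G) : G :=
  foldr (fun l acc =>
           let x := match l.1 with inl i => h i | inr j => g j end in
           gmul (if l.2 then ginv x else x) acc) gone v.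

(* Following Leibman, call f : K -> G polynomial of degree <= d when its
   iterated derivatives (D_a f)(x) = f(x)^-1 f(a x) of order i take values in
   γ_i, the lower central series indexed so that γ_0 = γ_1 = G.  Such maps
   are closed under pointwise products, inverses and commutators, and the
   coordinate maps of G^n are polynomial, so every word map h |-> v(h, g) is
   polynomial of any degree; when G has class k, γ_(k+1) = 1 and derivatives
   of order k+1 vanish.  Now if {f = c} is 2^d-large, then for every a the set
   {D_a f = 1}, which contains {f = c} ∩ a^-1 {f = c}, is 2^(d-1)-large, so by
   induction on d every D_a f is identically 1 and f is the constant c. *)

From mathcomp Require Import all_boot zify.
From Stdlib Require Import FunctionalExtensionality.

Set Implicit Arguments.
Unset Strict Implicit.
Unset Printing Implicit Defensive.

Section GroupFacts.
Variable G : group.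
Implicit Types x y : G.

Lemma gmulK x y : gmul (ginv x) (gmul x y) = y.
Proof. by rewrite gmulA gmulV gmul1. Qed.

Lemma gmulrV x : gmul x (ginv x) = gone.
Proof. by rewrite -[LHS]gmul1 -{1}(gmulV (ginv x)) -gmulA (gmulK x) gmulV. Qed.

Lemma gmulKV x y : gmul x (gmul (ginv x) y) = y.
Proof. by rewrite gmulA gmulrV gmul1. Qed.

Lemma gmulr1 x : gmul x gone = x.
Proof. by rewrite -(gmulV x) gmulKV. Qed.

Lemma ginvK x : ginv (ginv x) = x.
Proof. by rewrite -[LHS]gmulr1 -(gmulV x) gmulK. Qed.

Lemma ginv1 : ginv (@gone G) = gone.
Proof. by rewrite -[LHS]gmul1 gmulrV. Qed.

Lemma ginvM x y : ginv (gmul x y) = gmul (ginv y) (ginv x).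
Proof.
have e : gmul (gmul x y) (gmul (ginv y) (ginv x)) = gone.
  by rewrite -gmulA (gmulKV y) gmulrV.
by rewrite -[LHS]gmulr1 -e gmulK.
Qed.

End GroupFacts.

Ltac group_norm :=
  repeat progress rewrite -?gmulA
    ?(gmul1, gmulr1, gmulV, gmulrV, gmulK, gmulKV, ginvK, ginv1, ginvM).

Ltac group_eq := rewrite /comm; group_norm; done.

Section LowerCentralSeries.
Variable G : group.
Implicit Types x y z : G.
Notation L := (@lcs G).

Lemma lcs_one i : L i gone.
Proof. by case: i => [|i] //=; apply: gen_one. Qed.

Lemma lcs_mul i x y : L i x -> L i y -> L i (gmul x y).
Proof. by case: i => [|i] //= *; apply: gen_mul. Qed.

Lemma lcs_inv i x : L i x -> L i (ginv x).
Proof. by case: i => [|i] //= *; apply: gen_inv. Qed.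

Lemma lcs_conj i x y : L i x -> L i (gmul (ginv y) (gmul x y)).
Proof.
elim: i x y => [|i IH] x y //= h.
elim: h y => {x} [_ [x [z [hx ->]]]|| x1 x2 _ IH1 _ IH2| x _ IHx] y.
- apply: gen_in; exists (gmul (ginv y) (gmul x y)), (gmul (ginv y) (gmul z y)).
  by split; [exact: IH | group_eq].
- by rewrite gmul1 gmulV; apply: gen_one.
- have -> : gmul (ginv y) (gmul (gmul x1 x2) y)
          = gmul (gmul (ginv y) (gmul x1 y)) (gmul (ginv y) (gmul x2 y)) by group_eq.
  exact: gen_mul.
- have -> : gmul (ginv y) (gmul (ginv x) y) = ginv (gmul (ginv y) (gmul x y))
    by group_eq.
  exact: gen_inv.
Qed.

Lemma lcs_comm_l i x y : L i x -> L i.+1 (comm x y).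
Proof. by move=> h; apply: gen_in; exists x, y. Qed.

Lemma lcs_comm_r i x y : L i y -> L i.+1 (comm x y).
Proof.
move=> h; have -> : comm x y = ginv (comm y x) by group_eq.
exact/lcs_inv/lcs_comm_l.
Qed.

Lemma lcs_succ i x : L i.+1 x -> L i x.
Proof.
elim => {x} [_ [x [y [hx ->]]]|| x1 x2 _ IH1 _ IH2| x _ IHx].
- have -> : comm x y = gmul (ginv x) (gmul (ginv y) (gmul x y)) by group_eq.
  exact/lcs_mul/lcs_conj/hx/lcs_inv.
- exact: lcs_one.
- exact: lcs_mul.
- exact: lcs_inv.
Qed.

Lemma lcs_mono i j x : i <= j -> L j x -> L i x.
Proof.
move=> /subnKC <-; elim: (j - i) => [|d IH]; first by rewrite addn0.
by rewrite addnS => /lcs_succ.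
Qed.

Lemma lcs_comm i j x y : L i x -> L j y -> L (i + j).+1 (comm x y).
Proof.
elim: j i x y => [|j IH] i x y hx; first by rewrite addn0 => _; apply: lcs_comm_l.
move=> /= hy; elim: hy => {y} [_ [s [t [hs ->]]]|| y1 y2 _ IH1 _ IH2| y _ IHy];
  match goal with |- gen _ ?t => change (L (i + j.+1).+1 t) end.
- (* the Hall-Witt identity *)
  set N := L (i + j.+1).+1.
  have h1 : N (comm (comm x (ginv s)) (ginv t)).
    by rewrite /N addnS; apply/lcs_comm_l/IH/lcs_inv.
  have h2 : N (comm (comm (ginv t) (ginv x)) s).
    by rewrite /N addnS -addSn; apply: IH => //; apply/lcs_comm_r/lcs_inv.
  have -> : comm x (comm s t)
    = gmul (ginv t) (gmul (gmul (gmul (ginv x) (gmul (comm (comm (ginv t) (ginv x)) s) x))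
        (gmul (ginv s) (gmul (comm (comm x (ginv s)) (ginv t)) s))) t) by group_eq.
  by apply: lcs_conj; apply: lcs_mul; apply: lcs_conj.
- have -> : comm x gone = gone by group_eq.
  exact: lcs_one.
- have -> : comm x (gmul y1 y2) = gmul (comm x y2) (gmul (ginv y2) (gmul (comm x y1) y2))
    by group_eq.
  by apply: lcs_mul => //; apply: lcs_conj.
- have -> : comm x (ginv y) = ginv (gmul (ginv (ginv y)) (gmul (comm x y) (ginv y)))
    by group_eq.
  exact/lcs_inv/lcs_conj.
Qed.

End LowerCentralSeries.

(* [gamma j] is the lower central series term γ_j, with γ_0 = γ_1 = G; with
   this indexing [γ_i, γ_j] ⊆ γ_(i+j) holds for all i and j. *)
Definition gamma (G : group) (j : nat) : G -> Prop := @lcs G j.-1.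

Section Gamma.
Variable G : group.
Implicit Types x y : G.

Lemma gamma_one j : gamma j (@gone G).
Proof. exact: lcs_one. Qed.

Lemma gamma_mul j x y : gamma j x -> gamma j y -> gamma j (gmul x y).
Proof. exact: lcs_mul. Qed.

Lemma gamma_inv j x : gamma j x -> gamma j (ginv x).
Proof. exact: lcs_inv. Qed.

Lemma gamma_mono i j x : i <= j -> gamma j x -> gamma i x.
Proof. by move=> le_ij; apply: lcs_mono; rewrite -!subn1 leq_sub2r. Qed.

Lemma gamma_comm i j x y : gamma i x -> gamma j y -> gamma (i + j) (comm x y).
Proof.
case: i j => [|i] [|j] hx hy; rewrite /gamma ?addn0 ?addSn ?addnS /=.
- by [].
- have -> : comm x y = gmul (gmul (ginv x) (gmul (ginv y) x)) y by group_eq.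
  by apply: lcs_mul => //; apply: lcs_conj; apply: lcs_inv.
- have -> : comm x y = gmul (ginv x) (gmul (ginv y) (gmul x y)) by group_eq.
  by apply: lcs_mul; [apply: lcs_inv | apply: lcs_conj].
- exact: lcs_comm.
Qed.

End Gamma.

Section PolynomialMaps.
Variables K G : group.
Implicit Types f g p : K -> G.

Definition deriv (a : K) f : K -> G := fun x => gmul (ginv (f x)) (f (gmul a x)).
Definition fmul f g : K -> G := fun x => gmul (f x) (g x).
Definition finv f : K -> G := fun x => ginv (f x).
Definition fconj f p : K -> G := fun x => gmul (ginv (p x)) (gmul (f x) (p x)).
Definition fcomm f g : K -> G := fun x => comm (f x) (g x).

Fixpoint polymap (d j : nat) f : Prop :=
  if d is d'.+1 then (forall x, gamma j (f x)) /\ forall a, polymap d' j.+1 (deriv a f)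
  else forall x, gamma j (f x).

Lemma polymap_gamma d j f : polymap d j f -> forall x, gamma j (f x).
Proof. by case: d => [|d] //= []. Qed.

Lemma polymapS d j f : polymap d.+1 j f -> polymap d j f.
Proof.
elim: d j f => [|d IH] j f [hf hD] //=.
by split=> // a; apply: IH.
Qed.

Lemma polymap_mono d i j f : i <= j -> polymap d j f -> polymap d i f.
Proof.
elim: d i j f => [|d IH] i j f le_ij /=.
  by move=> hf x; apply: gamma_mono (hf x).
case=> hf hD; split=> [x|a]; first exact: gamma_mono (hf x).
exact: IH (hD a).
Qed.

Lemma polymap_const d j c : gamma j c -> polymap d j (fun=> c).
Proof.
elim: d j c => [|d IH] j c hc //=; split=> // a.
have -> : deriv a (fun=> c) = fun=> gone.
  by apply: functional_extensionality => x; rewrite /deriv gmulV.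
exact/IH/gamma_one.
Qed.

Lemma fconjE f p : fconj f p = fmul f (fcomm f p).
Proof. by apply: functional_extensionality => x; rewrite /fconj /fmul /fcomm; group_eq. Qed.

Lemma deriv_fmul a f g : deriv a (fmul f g) = fmul (fconj (deriv a f) g) (deriv a g).
Proof. by apply: functional_extensionality => x; rewrite /deriv /fmul /fconj; group_eq. Qed.

Lemma deriv_finv a f : deriv a (finv f) = fconj (finv (deriv a f)) (finv f).
Proof. by apply: functional_extensionality => x; rewrite /deriv /finv /fconj; group_eq. Qed.

(* Expand with [x y, z] = [x, z]^y [y, z] and [x, y z] = [x, z] [x, y]^z. *)
Lemma deriv_fcomm a f g :
  deriv a (fcomm f g) =
  fmul (fmul (fmul (fconj (fconj (fcomm f (deriv a g)) (deriv a f)) (fcomm f g))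
                   (fcomm (fcomm f g) (fmul (deriv a g) (deriv a f))))
             (fcomm (deriv a f) (deriv a g)))
       (fconj (fcomm (deriv a f) g) (deriv a g)).
Proof.
by apply: functional_extensionality => x; rewrite /deriv /fmul /fconj /fcomm; group_eq.
Qed.

Definition polymap_closed d : Prop :=
  [/\ forall j f g, polymap d j f -> polymap d j g -> polymap d j (fmul f g),
      forall j f, polymap d j f -> polymap d j (finv f)
    & forall i j f g, polymap d i f -> polymap d j g -> polymap d (i + j) (fcomm f g)].

Section ClosureStep.
Variable d : nat.
Hypothesis mul_d : forall j f g, polymap d j f -> polymap d j g -> polymap d j (fmul f g).
Hypothesis inv_d : forall j f, polymap d j f -> polymap d j (finv f).
Hypothesis comm_d :
  forall i j f g, polymap d i f -> polymap d j g -> polymap d (i + j) (fcomm f g).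

Lemma polymap_conj_step j f p : polymap d j f -> polymap d 0 p -> polymap d j (fconj f p).
Proof.
by move=> hf hp; rewrite fconjE; apply: mul_d => //; rewrite -[j]addn0; apply: comm_d.
Qed.

Lemma polymapS_mul j f g :
  polymap d.+1 j f -> polymap d.+1 j g -> polymap d.+1 j (fmul f g).
Proof.
move=> hf hg; split=> [x|a].
  exact: gamma_mul (polymap_gamma hf x) (polymap_gamma hg x).
rewrite deriv_fmul; apply: mul_d (hg.2 a); apply: polymap_conj_step (hf.2 a) _.
exact: polymap_mono (leq0n j) (polymapS hg).
Qed.

Lemma polymapS_inv j f : polymap d.+1 j f -> polymap d.+1 j (finv f).
Proof.
move=> hf; split=> [x|a]; first exact: gamma_inv (polymap_gamma hf x).
rewrite deriv_finv; apply: polymap_conj_step; first exact: inv_d (hf.2 a).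
exact: polymap_mono (leq0n j) (inv_d (polymapS hf)).
Qed.

Lemma polymapS_comm i j f g :
  polymap d.+1 i f -> polymap d.+1 j g -> polymap d.+1 (i + j) (fcomm f g).
Proof.
move=> hf hg; split=> [x|a].
  exact: gamma_comm (polymap_gamma hf x) (polymap_gamma hg x).
have [{}hf hF] := (polymapS hf, hf.2 a); have [{}hg hG] := (polymapS hg, hg.2 a).
have lower0 k h : polymap d k h -> polymap d 0 h := polymap_mono (leq0n k).
rewrite deriv_fcomm; apply: mul_d; first apply: mul_d; first apply: mul_d.
- apply: polymap_conj_step; last exact: lower0 _ _ (comm_d hf hg).
  apply: polymap_conj_step (lower0 _ _ hF); apply: (polymap_mono _ (comm_d hf hG)); lia.
- have hGF := mul_d (polymap_mono (ltn0Sn j) hG) (polymap_mono (ltn0Sn i) hF).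
  apply: (polymap_mono _ (comm_d (comm_d hf hg) hGF)); lia.
- apply: (polymap_mono _ (comm_d hF hG)); lia.
- apply: polymap_conj_step (lower0 _ _ hG); apply: (polymap_mono _ (comm_d hF hg)); lia.
Qed.

End ClosureStep.

Lemma polymap_closedP d : polymap_closed d.
Proof.
elim: d => [|d [mul_d inv_d comm_d]].
  split=> [j f g hf hg x|j f hf x|i j f g hf hg x];
    [exact: gamma_mul | exact: gamma_inv | exact: gamma_comm].
split; [exact: polymapS_mul | exact: polymapS_inv | exact: polymapS_comm].
Qed.

Lemma polymap_mul d j f g : polymap d j f -> polymap d j g -> polymap d j (fmul f g).
Proof. by case: (polymap_closedP d) => mul_d _ _; apply: mul_d. Qed.

Lemma polymap_inv d j f : polymap d j f -> polymap d j (finv f).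
Proof. by case: (polymap_closedP d) => _ inv_d _; apply: inv_d. Qed.

Lemma polymap_conj d j f p : polymap d j f -> polymap d 0 p -> polymap d j (fconj f p).
Proof. by case: (polymap_closedP d) => mul_d _ comm_d; apply: polymap_conj_step. Qed.

End PolynomialMaps.

Section Largeness.
Variable K : group.
Implicit Types X Y : K -> Prop.

Lemma large_sub m X Y : (forall x, X x -> Y x) -> large m X -> large m Y.
Proof.
move=> sXY lX b; have [y hy] := lX b; exists y => i.
by have [x [hx ->]] := hy i; exists x; split => //; apply: sXY.
Qed.

Lemma large_nonempty m X : 0 < m -> large m X -> exists x, X x.
Proof.
move=> m_gt0 lX; have [y hy] := lX (fun=> gone).
by have [x [hx _]] := hy (Ordinal m_gt0); exists x.
Qed.

Lemma large_translateI m X a : large (m + m) X -> large m (fun x => X x /\ X (gmul a x)).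
Proof.
move=> lX b.
have [y hy] :=
  lX (fun i => match split i with inl j => b j | inr j => gmul (b j) (ginv a) end).
exists y => j.
have [x1 [hx1 e1]] := hy (lshift m j); have [x2 [hx2 e2]] := hy (rshift m j).
rewrite -/(unsplit (inl j)) -/(unsplit (inr j)) !unsplitK /= in e1 e2.
have e : x2 = gmul a x1 by rewrite -(gmulK (b j) x1) -e1 e2; group_norm.
by exists x1; rewrite -e.
Qed.

End Largeness.

Section Rigidity.
Variables K G : group.
Implicit Types f : K -> G.

Lemma eq_of_deriv1_large m f c :
  0 < m -> large m (fun x => f x = c) -> (forall a x, deriv a f x = gone) ->
  forall x, f x = c.
Proof.
move=> m_gt0 lf f'1 x; have [x0 <-] := large_nonempty m_gt0 lf.
have f_inv a y : f (gmul a y) = f y.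
  by rewrite -[LHS](gmulKV (f y)); move: (f'1 a y); rewrite /deriv => ->; apply: gmulr1.
by rewrite -(f_inv (gmul x (ginv x0)) x0) -gmulA gmulV gmulr1.
Qed.

Lemma polymap_eq_of_large d j f c :
  polymap d.+1 j f -> trivial_sub (@gamma G (j + d.+1)) ->
  large (2 ^ d) (fun x => f x = c) -> forall x, f x = c.
Proof.
elim: d j f c => [|d IH] j f c hf triv lf;
  apply: (eq_of_deriv1_large (expn_gt0 2 _) lf) => a.
- by move=> x; apply: triv; rewrite addn1; apply: hf.2.
- apply: IH (hf.2 a) _ _; first by rewrite addSnnS.
  rewrite expnS mul2n -addnn in lf.
  by apply: large_sub (large_translateI a lf) => x [fx fax]; rewrite /deriv fx fax gmulV.
Qed.

End Rigidity.

Section WordMaps.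
Variables (G : group) (n m : nat).

Lemma coord_polymap d i : polymap d 0 (fun h : power_group G n => h i).
Proof.
elim: d => [|d IH] //=; split=> // a.
have -> : deriv (a : power_group G n) (fun h => h i)
          = fconj (fun=> a i) (fun h : power_group G n => h i).
  by apply: functional_extensionality => x; rewrite /deriv /fconj /= ffunE.
exact/polymap_conj/IH/polymap_const.
Qed.

Lemma word_polymap d (v : word n m) (g : 'I_m -> G) :
  polymap d 0 (fun h : power_group G n => eval_word v h g).
Proof.
elim: v => [|[[i|j] b] v IH] /=; first exact: polymap_const.
- apply: (polymap_mul _ IH); case: b; last exact: coord_polymap.
  exact/polymap_inv/coord_polymap.
- exact/(polymap_mul _ IH)/polymap_const.
Qed.

End WordMaps.

Theorem theorem6p5 (G : group) (k n m : nat) (v : word n m)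
    (g : 'I_m -> G) (c : G) :
  nilpotent_class G k ->
  @large (power_group G n) (2 ^ k)
        (fun h : power_group G n => eval_word v h g = c) ->
  forall h : power_group G n, eval_word v h g = c.
Proof.
case=> lcs_k_trivial _; apply: polymap_eq_of_large (word_polymap k.+1 v g) _.
by rewrite add0n; apply: lcs_k_trivial.
Qed.
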